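(* Consider a Factored Non-stationary MDP whose data are generated by the structural equations below, and suppose that all change factors $\boldsymbol{\theta}^s_t$ and $\boldsymbol{\theta}^r_t$ are observed (so the joint process of states, actions, rewards and change factors is a Markov process). Assume the causal Markov condition and faithfulness hold for the dynamic Bayesian network $\mathcal{G}$ with respect to the joint distribution of all these variables (i.e., conditional independences among the variables correspond exactly to d-separations in $\mathcal{G}$ unrolled over time). Then all binary masks $\boldsymbol{C}^{\boldsymbol{s}\to\boldsymbol{s}}$, $\boldsymbol{C}^{\boldsymbol{a}\to\boldsymbol{s}}$, $\boldsymbol{C}^{\boldsymbol{\theta}^s\to\boldsymbol{s}}$, $\boldsymbol{c}^{\boldsymbol{s}\to r}$, $\boldsymbol{c}^{\boldsymbol{a}\to r}$, $\boldsymbol{C}^{\boldsymbol{\theta}^s\to\boldsymbol{\theta}^s}$ and $\boldsymbol{C}^{\boldsymbol{\theta}^r\to\boldsymbol{\theta}^r}$ are identifiable from the joint distribution of the observed variables; that is, the causal graph $\mathcal{G}$ can be fully recovered.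
   Context: States $\boldsymbol{s}_t=(s_{1,t},\dots,s_{d,t})\in\mathbb{R}^d$, actions $\boldsymbol{a}_t\in\mathbb{R}^m$, rewards $r_t\in\mathbb{R}$, dynamics change factors $\boldsymbol{\theta}^s_t\in\mathbb{R}^p$, reward change factors $\boldsymbol{\theta}^r_t\in\mathbb{R}^q$. The generative process is, for $i=1,\dots,d$, $j=1,\dots,p$, $k=1,\dots,q$: $s_{i,t}=f_i(\boldsymbol{c}^{\boldsymbol{s}\to\boldsymbol{s}}_i\odot\boldsymbol{s}_{t-1},\ \boldsymbol{c}^{\boldsymbol{a}\to\boldsymbol{s}}_i\odot\boldsymbol{a}_{t-1},\ \boldsymbol{c}^{\boldsymbol{\theta}^s\to\boldsymbol{s}}_i\odot\boldsymbol{\theta}^s_t,\ \epsilon^s_{i,t})$; $r_t=h(\boldsymbol{c}^{\boldsymbol{s}\to r}\odot\boldsymbol{s}_t,\ \boldsymbol{c}^{\boldsymbol{a}\to r}\odot\boldsymbol{a}_t,\ \boldsymbol{\theta}^r_t,\ \epsilon^r_t)$; $\theta^s_{j,t}=g^s(\boldsymbol{c}^{\boldsymbol{\theta}^s\to\boldsymbol{\theta}^s}_j\odot\boldsymbol{\theta}^s_{t-1},\ \epsilon^{\theta^s}_t)$; $\theta^r_{k,t}=g^r(\boldsymbol{c}^{\boldsymbol{\theta}^r\to\boldsymbol{\theta}^r}_k\odot\boldsymbol{\theta}^r_{t-1},\ \epsilon^{\theta^r}_t)$, where $\odot$ is the elementwise product, $f_i,h,g^s,g^r$ are (nonlinear)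 functions, and all noise terms are i.i.d. and mutually independent. The binary masks $\boldsymbol{c}^{\boldsymbol{s}\to\boldsymbol{s}}_i\in\{0,1\}^d$, $\boldsymbol{c}^{\boldsymbol{a}\to\boldsymbol{s}}_i\in\{0,1\}^m$, $\boldsymbol{c}^{\boldsymbol{\theta}^s\to\boldsymbol{s}}_i\in\{0,1\}^p$, $\boldsymbol{c}^{\boldsymbol{s}\to r}\in\{0,1\}^d$, $\boldsymbol{c}^{\boldsymbol{a}\to r}\in\{0,1\}^m$, $\boldsymbol{c}^{\boldsymbol{\theta}^s\to\boldsymbol{\theta}^s}_j\in\{0,1\}^p$, $\boldsymbol{c}^{\boldsymbol{\theta}^r\to\boldsymbol{\theta}^r}_k\in\{0,1\}^q$ are time-invariant and grouped into matrices $\boldsymbol{C}^{\boldsymbol{s}\to\boldsymbol{s}}=[\boldsymbol{c}^{\boldsymbol{s}\to\boldsymbol{s}}_i]_{i=1}^d$, $\boldsymbol{C}^{\boldsymbol{a}\to\boldsymbol{s}}=[\boldsymbol{c}^{\boldsymbol{a}\to\boldsymbol{s}}_i]_{i=1}^d$, $\boldsymbol{C}^{\boldsymbol{\theta}^s\to\boldsymbol{s}}=[\boldsymbol{c}^{\boldsymbol{\theta}^s\to\boldsymbol{s}}_i]_{i=1}^d$, $\boldsymbol{C}^{\boldsymbol{\theta}^s\to\boldsymbol{\theta}^s}=[\boldsymbol{c}^{\boldsymbol{\theta}^s\to\boldsymbol{\theta}^s}_j]_{j=1}^p$, $\boldsymbol{C}^{\boldsymbol{\theta}^r\to\boldsymbol{\theta}^r}=[\boldsymbol{c}^{\boldsymbol{\theta}^r\to\boldsymbol{\theta}^r}_k]_{k=1}^q$.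 The dynamic Bayesian network $\mathcal{G}$ has an edge from a variable to the left-hand-side variable of an equation exactly when the corresponding mask entry equals $1$ (each component of $\boldsymbol{\theta}^r_t$ is a parent of $r_t$). Standing assumptions: the graph is time-invariant, there are no unobserved confounders, there are no instantaneous causal effects among state, action and reward variables, and actions are not caused by any other variable of the system. *)

From mathcomp Require Import all_boot all_order all_algebra.
Set Implicit Arguments. Unset Strict Implicit. Unset Printing Implicit Defensive.

(* Variables of the unrolled dynamic Bayesian network, indexed by time t : nat *)
Inductive fvar (d m p q : nat) : Type :=
| Sv  of 'I_d & nat
| Av  of 'I_m & nat
| Rv  of nat
| THs of 'I_p & nat
| THr of 'I_q & nat.

(* Row i of a matrix is the mask vector c_i:
   Css i j  : s_{j,t-1}       -> s_{i,t}
   Cas i k  : a_{k,t-1}       -> s_{i,t}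
   Cths i k : theta^s_{k,t}   -> s_{i,t}
   csr 0 i  : s_{i,t}         -> r_t
   car 0 k  : a_{k,t}         -> r_t
   Ctt j k  : theta^s_{k,t-1} -> theta^s_{j,t}
   Crr j k  : theta^r_{k,t-1} -> theta^r_{j,t} *)
Record masks (d m p q : nat) := Masks {
  Css  : 'M[bool]_(d, d);
  Cas  : 'M[bool]_(d, m);
  Cths : 'M[bool]_(d, p);
  csr  : 'rV[bool]_d;
  car  : 'rV[bool]_m;
  Ctt  : 'M[bool]_(p, p);
  Crr  : 'M[bool]_(q, q) }.

Definition edge d m p q (M : masks d m p q) (u v : fvar d m p q) : Prop :=
  match u, v with
  | Sv j t, Sv i t' => t' = t.+1 /\ Css M i j
  | Av k t, Sv i t' => t' = t.+1 /\ Cas M i k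
  | THs k t, Sv i t' => t' = t /\ Cths M i k
  | Sv i t, Rv t' => t' = t /\ csr M ord0 i
  | Av k t, Rv t' => t' = t /\ car M ord0 k
  | THr k t, Rv t' => t' = t
  | THs k t, THs j t' => t' = t.+1 /\ Ctt M j k
  | THr k t, THr j t' => t' = t.+1 /\ Crr M j k
  | _, _ => False
  end.

Section Dsep.
Variables (V : Type) (E : V -> V -> Prop).

Fixpoint inlist (x : V) (s : seq V) : Prop :=
  match s with [::] => False | y :: s' => y = x \/ inlist x s' end.

Fixpoint nodupP (s : seq V) : Prop :=
  match s with [::] => True | y :: s' => ~ inlist y s' /\ nodupP s' end.

Fixpoint is_trail (s : seq V) : Prop :=
  match s with
  | x :: ((y :: _) as s') => (E x y \/ E y x) /\ is_trail s'
  | _ => True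
  end.

Inductive desc : V -> V -> Prop :=
| desc_refl x : desc x x
| desc_step x y z : E x y -> desc y z -> desc x z.

Definition blocked (x0 : V) (Z : seq V) (s : seq V) : Prop :=
  exists i, 0 < i /\ i.+1 < size s /\
    let u := nth x0 s i.-1 in let w := nth x0 s i in let v := nth x0 s i.+1 in
    (E u w /\ E v w /\ ~ (exists z, inlist z Z /\ desc w z))
    \/ (~ (E u w /\ E v w) /\ inlist w Z).

Definition dsep (x0 : V) (X Y Z : seq V) : Prop :=
  forall x y l, inlist x X -> inlist y Y ->
    is_trail (x :: l ++ [:: y]) -> nodupP (x :: l ++ [:: y]) ->
    blocked x0 Z (x :: l ++ [:: y]).

Definition disjointP (X Y : seq V) : Prop := forall v, inlist v X -> ~ inlist v Y.

End Dsep.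

(* The conditional-independence model CI (CI X Y Z : "X is independent of Y given
   Z" in the joint distribution) satisfies the causal Markov condition and
   faithfulness w.r.t. the unrolled graph: independences = d-separations. *)
Definition markov_faithful d m p q
    (CI : seq (fvar d m p q) -> seq (fvar d m p q) -> seq (fvar d m p q) -> Prop)
    (M : masks d m p q) : Prop :=
  forall X Y Z, disjointP X Y -> disjointP X Z -> disjointP Y Z ->
    (CI X Y Z <-> dsep (edge M) (Rv d m p q 0) X Y Z).

From mathcomp Require Import all_boot all_order all_algebra.
From Stdlib Require Import Classical Lia.
From mathcomp Require Import zify.
Set Implicit Arguments. Unset Strict Implicit.

(* Every edge of the unrolled network goes forward in the topological order
   3t (actions, change factors) < 3t+1 (states) < 3t+2 (reward).  In a graph
   ranked this way, if u precedes v and is not a parent of v, then the parents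
   of v d-separate u from v: on a trail from u to v, the last vertex before v
   is either a parent of v (a non-collider in the conditioning set), or the
   trail enters v from a child of v, and then walking back along the trail one
   meets a collider whose rank exceeds that of v, hence none of whose
   descendants is a parent of v.  Adjacent vertices are never d-separated, so
   faithfulness to two graphs forces them to have the same edges, and every
   mask entry is read off one edge. *)

Lemma exists_inlist_filter (V : Type) (P : V -> Prop) (L : seq V) :
  exists Z, forall z, inlist z Z <-> inlist z L /\ P z.
Proof.
elim: L => [|x L [Z HZ]]; first by exists [::] => z /=; tauto.
case: (classic (P x)) => Px; [exists (x :: Z) | exists Z] => z /=; rewrite HZ.
- by split; [case=> [<-|[]] | case; case=> [<-|]]; auto.
- by split; [tauto | case; case=> [<-|] //; tauto].
Qed.

Lemma inlist_cat (T : Type) (x : T) (s1 s2 : seq T) :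
  inlist x s1 \/ inlist x s2 -> inlist x (s1 ++ s2).
Proof. by elim: s1 => [|y s1 IH] /=; [case | case=> [[]|]; auto]. Qed.

Lemma inlist_map_enum (I : finType) (T : Type) (f : I -> T) i :
  inlist (f i) (map f (enum I)).
Proof.
have : i \in enum I by rewrite mem_enum.
elim: (enum I) => [|j s IH] //=; rewrite in_cons => /orP [/eqP ->|/IH]; auto.
Qed.

Section RankedGraph.
Variables (V : Type) (E : V -> V -> Prop) (rank : V -> nat).
Hypothesis edge_rank : forall x y, E x y -> (rank x < rank y)%coq_nat.

Lemma desc_rank_le x y : desc E x y -> (rank x <= rank y)%coq_nat.
Proof. elim=> [z|a b c Eab _ IH]; [lia|]. have := edge_rank Eab; lia. Qed.

Lemma is_trail_nth x0 s : is_trail E s -> forall k, k.+1 < size s ->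
  E (nth x0 s k) (nth x0 s k.+1) \/ E (nth x0 s k.+1) (nth x0 s k).
Proof.
elim: s => [|x s IH] //=.
case: s IH => [|y s] IH //= [Exy Hs] [|k] Hk //=.
exact: (IH Hs k).
Qed.

Lemma adjacent_not_dsep x0 u v Z : u <> v -> E u v ->
  ~ dsep E x0 [:: u] [:: v] Z.
Proof.
move=> Nuv Euv /(_ u v [::] (or_introl erefl) (or_introl erefl)) Hsep.
have trail_uv : is_trail E [:: u; v] by split => //; left.
have nodup_uv : nodupP [:: u; v] by split; [case=> // /esym | split].
have [i [i_gt0 [i_lt2 _]]] := Hsep trail_uv nodup_uv.
by move: i_lt2 => /=; lia.
Qed.

Section ParentsSeparate.
Variables (x0 u v : V) (Z : seq V).
Hypothesis rank_uv : (rank u < rank v)%coq_nat.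
Hypothesis not_Euv : ~ E u v.
Hypothesis parentsZ : forall z, inlist z Z <-> E z v.

(* Descent on k: a backward edge cannot end at u, which ranks below v, so
   going back one meets a collider ranked above v, none of whose descendants
   can be a parent of v. *)
Lemma blocked_of_backward_edge s : is_trail E s -> nth x0 s 0 = u ->
  forall k, k.+1 < size s -> E (nth x0 s k.+1) (nth x0 s k) ->
  (rank v <= rank (nth x0 s k.+1))%coq_nat -> blocked E x0 Z s.
Proof.
move=> Hs s0 k; elim: k => [|k IH] Hk Eback rank_ge.
  by have := edge_rank Eback; rewrite s0; lia.
have Hk' : k.+1 < size s by lia.
case: (is_trail_nth x0 Hs Hk') => Eprev; last first.
  by apply: IH => //; have := edge_rank Eback; lia.
exists k.+1; do 2 split => //; left; do 2 split => //.
move=> [z [/parentsZ Ezv /desc_rank_le desc_le]].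
have := edge_rank Eback; have := edge_rank Ezv; lia.
Qed.

Lemma dsep_parents : dsep E x0 [:: u] [:: v] Z.
Proof.
move=> x y l [<-|//] [<-|//] + _.
set s := u :: l ++ [:: v] => Hs.
have s0 : nth x0 s 0 = u by [].
have s_last : nth x0 s (size l).+1 = v by rewrite /= nth_cat ltnn subnn.
have size_s : size s = (size l).+2 by rewrite /= size_cat addn1.
have Hlast : (size l).+1 < size s by rewrite size_s.
case: (is_trail_nth x0 Hs Hlast); rewrite s_last => Elast; last first.
  by apply: (blocked_of_backward_edge Hs s0 Hlast); rewrite s_last //; lia.
have [l0|l_gt0] := posnP (size l); first by move: Elast; rewrite l0.
exists (size l); do 2 split => //.
right; split; last by apply/parentsZ.
rewrite s_last => -[_ Evw].
have := edge_rank Evw; have := edge_rank Elast; lia.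
Qed.

End ParentsSeparate.

End RankedGraph.

Section FactoredNMDP.
Variables (d m p q : nat).
Implicit Types (M : masks d m p q) (x y : fvar d m p q).

Definition fvar_rank x : nat :=
  match x with
  | Sv _ t => 3 * t + 1 | Av _ t => 3 * t | Rv t => 3 * t + 2
  | THs _ t => 3 * t | THr _ t => 3 * t end.

Definition fvar_time x : nat :=
  match x with
  | Sv _ t => t | Av _ t => t | Rv t => t | THs _ t => t | THr _ t => t end.

Lemma edge_fvar_rank M x y : edge M x y -> (fvar_rank x < fvar_rank y)%coq_nat.
Proof.
case: x => [i t|i t|t|i t|i t]; case: y => [i' t'|i' t'|t'|i' t'|i' t'] //=;
  try (case=> -> _ ; lia); move=> ->; lia.
Qed.

Lemma edge_fvar_time M x y : edge M x y ->
  fvar_time x = fvar_time y \/ fvar_time x = (fvar_time y).-1.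
Proof.
case: x => [i t|i t|t|i t|i t]; case: y => [i' t'|i' t'|t'|i' t'|i' t'] //=;
  try (case=> -> _ ; simpl; lia); move=> ->; lia.
Qed.

Definition vars_at t : seq (fvar d m p q) :=
  map (fun i => Sv m p q i t) (enum 'I_d) ++
  map (fun i => Av d p q i t) (enum 'I_m) ++
  [:: Rv d m p q t] ++
  map (fun i => THs d m q i t) (enum 'I_p) ++
  map (fun i => THr d m p i t) (enum 'I_q).

Lemma inlist_vars_at x : inlist x (vars_at (fvar_time x)).
Proof.
rewrite /vars_at; case: x => [i t|i t|t|i t|i t] /=;
  do ?[by left | by apply: inlist_map_enum | apply: inlist_cat; first [
      by left; apply: inlist_map_enum | right] | right].
Qed.

Lemma exists_parents M y : exists Z, forall z, inlist z Z <-> edge M z y.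
Proof.
have [Z HZ] := exists_inlist_filter (fun z => edge M z y)
  (vars_at (fvar_time y).-1 ++ vars_at (fvar_time y)).
exists Z => z; rewrite HZ; split=> [[]//|Ezy]; split=> //.
by apply: inlist_cat; case: (edge_fvar_time Ezy) => <-;
  [right | left]; exact: inlist_vars_at.
Qed.

Lemma edge_sub_of_markov_faithful CI M1 M2 :
  markov_faithful CI M1 -> markov_faithful CI M2 ->
  forall x y, edge M1 x y -> edge M2 x y.
Proof.
move=> MF1 MF2 x y E1xy; apply: NNPP => N2xy.
have rank_xy := edge_fvar_rank E1xy.
have [Z parentsZ] := exists_parents M2 y.
have dj_xy : disjointP [:: x] [:: y] by move=> w /= [<-|//] [Hw|//]; subst; lia.
have dj_xZ : disjointP [:: x] Z by move=> w /= [<-|//] /parentsZ.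
have dj_yZ : disjointP [:: y] Z.
  by move=> w /= [<-|//] /parentsZ /edge_fvar_rank; lia.
apply: (@adjacent_not_dsep _ _ (Rv d m p q 0) x y Z _ E1xy).
  by move=> Exy; subst; lia.
apply/(MF1 _ _ _ dj_xy dj_xZ dj_yZ)/(MF2 _ _ _ dj_xy dj_xZ dj_yZ).
exact: (dsep_parents (@edge_fvar_rank M2) _ rank_xy N2xy parentsZ).
Qed.

Lemma masks_eq_of_edge_iff M1 M2 :
  (forall x y, edge M1 x y <-> edge M2 x y) ->
  Css M1 = Css M2 /\ Cas M1 = Cas M2 /\ Cths M1 = Cths M2 /\
  csr M1 = csr M2 /\ car M1 = car M2 /\ Ctt M1 = Ctt M2 /\ Crr M1 = Crr M2.
Proof.
move=> E12.
have mask_eq k n (C : masks d m p q -> 'M[bool]_(k, n)) f g :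
    (forall M i j, edge M (f j) (g i) <-> C M i j) -> C M1 = C M2.
  move=> HC; apply/matrixP => i j.
  by apply/idP/idP => [/HC/E12/HC | /HC/E12/HC].
do !split.
- apply: (mask_eq _ _ (@Css _ _ _ _) (fun j => Sv m p q j 0) (fun i => Sv m p q i 1)).
  by move=> N i j /=; intuition.
- apply: (mask_eq _ _ (@Cas _ _ _ _) (fun j => Av d p q j 0) (fun i => Sv m p q i 1)).
  by move=> N i j /=; intuition.
- apply: (mask_eq _ _ (@Cths _ _ _ _) (fun j => THs d m q j 0) (fun i => Sv m p q i 0)).
  by move=> N i j /=; intuition.
- apply: (mask_eq _ _ (@csr _ _ _ _) (fun j => Sv m p q j 0) (fun=> Rv d m p q 0)).
  by move=> N i j /=; rewrite (ord1 i); intuition.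
- apply: (mask_eq _ _ (@car _ _ _ _) (fun j => Av d p q j 0) (fun=> Rv d m p q 0)).
  by move=> N i j /=; rewrite (ord1 i); intuition.
- apply: (mask_eq _ _ (@Ctt _ _ _ _) (fun j => THs d m q j 0) (fun i => THs d m q i 1)).
  by move=> N i j /=; intuition.
- apply: (mask_eq _ _ (@Crr _ _ _ _) (fun j => THr d m p j 0) (fun i => THr d m p i 1)).
  by move=> N i j /=; intuition.
Qed.

End FactoredNMDP.

Theorem proposition1 (d m p q : nat)
    (CI : seq (fvar d m p q) -> seq (fvar d m p q) -> seq (fvar d m p q) -> Prop)
    (M1 M2 : masks d m p q) :
  markov_faithful CI M1 -> markov_faithful CI M2 ->
  Css M1 = Css M2 /\ Cas M1 = Cas M2 /\ Cths M1 = Cths M2 /\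
  csr M1 = csr M2 /\ car M1 = car M2 /\ Ctt M1 = Ctt M2 /\ Crr M1 = Crr M2.
Proof.
move=> MF1 MF2; apply: masks_eq_of_edge_iff => x y.
by split; [exact: (edge_sub_of_markov_faithful MF1 MF2) |
  exact: (edge_sub_of_markov_faithful MF2 MF1)].
Qed.
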